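(* For any $m,n\geqslant 0$ and $N\geqslant 1$ and any $T\in V^{m,n}$, $$\tfrac12\big(E^i{}_jE^j{}_i+NE^i{}_i\big)T=\begin{cases}\mathscr{C}_{m,n}(T), & m,n\geqslant 1,\\ \mathscr{L}_m(T), & n=0,\\ \mathscr{R}_n(T)+Nn\,T, & m=0,\end{cases}$$ (summation over repeated indices). In particular, for $m,n\geqslant1$, $\mathscr{C}_{m,n}$ lies in the centre of $C_{m,n}(N)$.
   Context: $V$ is an $N$-dimensional complex vector space with basis $\{e_i\}$ and dual basis $\{e^i\}$ of $V^*$; $V^{m,n}=V^{\otimes m}\otimes V^{*\otimes n}$ ($V^{0,0}=\mathbb{C}$), with the diagonal action of $GL(N)$ (contragredient on $V^*$); $C_{m,n}(N)=\mathrm{End}_{GL(N)}(V^{m,n})$. The matrix units $E^i{}_j\in\mathfrak{gl}_N$ act by $E^i{}_j(e_k)=-e_j\delta^i_k$, $E^i{}_j(e^k)=\delta^k_je^i$, and act on $V^{m,n}$ as derivations (Leibniz rule over the tensor factors). $\tau_{ab}$ ($1\leqslant a<b\leqslant m$) swaps the $a$-th and $b$-th factors $V$, $\tau_{a'b'}$ swaps the $a'$-th and $b'$-th factors $V^*$. $\mathscr{L}_m=\sum_{a<b}\tau_{ab}$ if $m\geqslant2$ and $0$ otherwise; $\mathscr{R}_n=\sum_{a'<b'}\tau_{a'b'}$ if $n\geqslant 2$ and $0$ otherwise. For $1\leqslant a\leqslant m$, $1\leqslant b'\leqslant n$, $\tau_{ab'}$ is the map which contracts the $a$-th $V$-factor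 with the $b'$-th $V^*$-factor and then inserts $\sum_ke_k\otimes e^k$ in these two positions; $\mathscr{A}_{m,n}=\sum_{a,b'}\tau_{ab'}$, and $\mathscr{C}_{m,n}=\mathscr{L}_m+\mathscr{R}_n-\mathscr{A}_{m,n}+Nn$ for $m,n\geqslant 1$. *)

From HB Require Import structures.
From mathcomp Require Import all_boot all_order all_algebra all_fingroup all_field.
Set Implicit Arguments. Unset Strict Implicit. Unset Printing Implicit Defensive.
Import Order.TTheory GRing.Theory Num.Theory.
Local Open Scope ring_scope.

(* Basis of V = C^N indexed by 'I_N.  A tensor T in V^{m,n} is given by its
   coefficients on the basis e_{a_1}(x)...(x)e_{a_m}(x)e^{b_1}(x)...(x)e^{b_n},
   indexed by pairs (a,b) of multi-indices. *)
Definition idx (N m n : nat) := ({ffun 'I_m -> 'I_N} * {ffun 'I_n -> 'I_N})%type.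
Definition tensor (N m n : nat) := {ffun idx N m n -> algC^o}.

Definition upd (k N : nat) (f : {ffun 'I_k -> 'I_N}) (p : 'I_k) (i : 'I_N)
  : {ffun 'I_k -> 'I_N} := [ffun t => if t == p then i else f t].

(* Action of E^i_j : E(e_k) = - delta^i_k e_j, E(e^k) = delta^k_j e^i,
   extended as a derivation; written in coordinates. *)
Definition Eact (N m n : nat) (i j : 'I_N) (T : tensor N m n) : tensor N m n :=
  [ffun x : idx N m n =>
     \sum_(p < m) (if x.1 p == j then - T (upd x.1 p i, x.2) else 0)
   + \sum_(q < n) (if x.2 q == i then T (x.1, upd x.2 q j) else 0)].

Definition Casimir (N m n : nat) (T : tensor N m n) : tensor N m n :=
  2%:R^-1 *: (\sum_(i < N) \sum_(j < N) Eact i j (Eact j i T)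
              + N%:R *: \sum_(i < N) Eact i i T).

Definition tauV (N m n : nat) (a b : 'I_m) (T : tensor N m n) : tensor N m n :=
  [ffun x : idx N m n => T ([ffun t => x.1 (tperm a b t)], x.2)].
Definition tauVs (N m n : nat) (a b : 'I_n) (T : tensor N m n) : tensor N m n :=
  [ffun x : idx N m n => T (x.1, [ffun t => x.2 (tperm a b t)])].
(* tau_{ab'}: contract a-th V factor with b'-th V^* factor and insert
   sum_k e_k (x) e^k in these positions *)
Definition tauMix (N m n : nat) (a : 'I_m) (b : 'I_n) (T : tensor N m n)
  : tensor N m n :=
  [ffun x : idx N m n =>
     if x.1 a == x.2 b then \sum_(k < N) T (upd x.1 a k, upd x.2 b k) else 0].

Definition Lop (N m n : nat) (T : tensor N m n) : tensor N m n :=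
  \sum_(a < m) \sum_(b < m | (a < b)%N) tauV a b T.
Definition Rop (N m n : nat) (T : tensor N m n) : tensor N m n :=
  \sum_(a < n) \sum_(b < n | (a < b)%N) tauVs a b T.
Definition Aop (N m n : nat) (T : tensor N m n) : tensor N m n :=
  \sum_(a < m) \sum_(b < n) tauMix a b T.
Definition Cop (N m n : nat) (T : tensor N m n) : tensor N m n :=
  Lop T + Rop T - Aop T + (N * n)%:R *: T.

(* Diagonal action of g in GL(N) on V^{m,n}: g e_k = sum_l g_{lk} e_l,
   contragredient on V^*: g e^k = sum_l (g^-1)_{kl} e^l. *)
Definition glact (N m n : nat) (g : 'M[algC]_N) (T : tensor N m n)
  : tensor N m n :=
  [ffun x : idx N m n =>
     \sum_(y : idx N m n)
        (\prod_(p < m) g (x.1 p) (y.1 p))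
      * (\prod_(q < n) (invmx g) (y.2 q) (x.2 q)) * T y].

Definition gl_equivariant (N m n : nat) (f : tensor N m n -> tensor N m n) :=
  forall g : 'M[algC]_N, g \in unitmx ->
    forall T : tensor N m n, f (glact g T) = glact g (f T).

(* Write E^i_j = - glder (e_ji), where glder A is the infinitesimal action of
   A in gl_N on V^{m,n}; it is the sum of an action on the V factors and one on
   the V^* factors. Expanding the double sum in coordinates, the V-V terms give
   N m + 2 L_m, the V^*-V^* terms N n + 2 R_n, the two mixed terms -2 A_{m,n},
   and N E^i_i contributes N (n - m); halving yields C_{m,n}.
   Each tau commutes with GL(N) (for tau_{ab'} because g^-1 g = 1 = g g^-1), so
   C_{m,n} is equivariant. Conversely, if A^2 = 0 then t |-> glact (1 + t A) is
   polynomial in t with linear coefficient glder A, so an equivariant linear f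
   commutes with glder A. Square-zero matrices and the identity span gl_N, hence
   f commutes with every E^i_j and thus with the Casimir operator C_{m,n}. *)

From HB Require Import structures.
From mathcomp Require Import all_boot all_order all_algebra all_fingroup all_field.
From mathcomp Require Import ring.
Import GRing.Theory Num.Theory.
Set Implicit Arguments. Unset Strict Implicit. Unset Printing Implicit Defensive.
Local Open Scope ring_scope.

Lemma scale_regularE (R : pzRingType) (a b : R) : a *: (b : R^o) = a * b.
Proof. by []. Qed.

Lemma sum_delta_mul (R : pzSemiRingType) (I : finType) (a : I) (F : I -> R) :
  \sum_j (a == j)%:R * F j = F a.
Proof.
rewrite (bigD1 a) //= eqxx mul1r big1 ?addr0 // => j /negbTE.
by rewrite eq_sym => ->; rewrite mul0r.
Qed.

Lemma sum_neq_pairs_sym (V : nmodType) k (F : 'I_k -> 'I_k -> V) :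
  (forall a b, F a b = F b a) ->
  \sum_(a < k) \sum_(b < k | b != a) F a b
  = (\sum_(a < k) \sum_(b < k | (a < b)%N) F a b) *+ 2.
Proof.
move=> Fsym; rewrite mulr2n.
transitivity (\sum_(a < k)
  (\sum_(b < k | (a < b)%N) F a b + \sum_(b < k | (b < a)%N) F a b)).
  apply: eq_bigr => a _; rewrite (bigID (fun b : 'I_k => (a < b)%N)) /=.
  by congr (_ + _); apply: eq_bigl => b; rewrite neq_ltn; case: ltngtP.
rewrite big_split /= (exchange_big_dep predT) //=; congr (_ + _).
by apply: eq_bigr => a _; apply: eq_bigr => b _; rewrite Fsym.
Qed.

Lemma linear_sum_fun (R : pzRingType) (U V : lmodType R) (I : finType) (P : pred I)
    (F : I -> U -> V) :
  (forall i, linear (F i)) -> linear (fun u => \sum_(i | P i) F i u).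
Proof.
by move=> Flin c u v; rewrite scaler_sumr -big_split; apply: eq_bigr => i _; apply: Flin.
Qed.

Lemma prod_eq_ffun (R : comPzSemiRingType) (I : finType) (T : eqType)
    (x y : {ffun I -> T}) :
  \prod_i (x i == y i)%:R = (x == y)%:R :> R.
Proof.
have [->|nxy] := eqVneq x y; first by rewrite big1 // => i _; rewrite eqxx.
have [i /negbTE xyi] : exists i, x i != y i.
  apply/existsP; apply: contraR nxy => /existsPn xy.
  by apply/eqP/ffunP => i; apply/eqP/negPn.
by rewrite (bigD1 i) //= xyi mul0r.
Qed.

Lemma coef1_prod (R : comNzRingType) (I : eqType) (r : seq I) (F : I -> {poly R}) :
  uniq r ->
  (\prod_(i <- r) F i)`_1 = \sum_(i <- r) (F i)`_1 * \prod_(j <- r | j != i) (F j)`_0.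
Proof.
elim: r => [|h r IH] /=; first by rewrite !big_nil coefC.
case/andP => hr ur.
rewrite !big_cons coefM big_ord_recr big_ord1 /= IH // coef0_prod eqxx /=.
rewrite addrC; congr (_ + _).
  congr (_ * _); rewrite big_seq_cond [RHS]big_seq_cond; apply: eq_bigl => j.
  by case jr: (j \in r) => //=; apply/esym/eqP => ej; rewrite -ej jr in hr.
rewrite mulr_sumr [LHS]big_seq [RHS]big_seq; apply: eq_bigr => i ir.
rewrite big_cons; have -> : (h != i) by apply/eqP => ei; rewrite ei ir in hr.
by rewrite mulrCA.
Qed.

Lemma poly_horner_inj (R : numDomainType) (p q : {poly R}) :
  (forall t, p.[t] = q.[t]) -> p = q.
Proof.
move=> pq; apply/eqP; rewrite -subr_eq0; apply/eqP.
apply: (@roots_geq_poly_eq0 _ _ [seq i%:R | i <- iota 0 (size (p - q))]).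
- by apply/allP => _ /mapP[i _ ->]; rewrite rootE hornerD hornerN pq subrr.
- by rewrite map_inj_uniq ?iota_uniq // => i j /eqP; rewrite eqr_nat => /eqP.
- by rewrite size_map size_iota.
Qed.

Section SquareZero.
Variables (R : comUnitRingType) (n : nat) (A : 'M[R]_n).
Hypothesis A2 : A *m A = 0.

Lemma mx1D_sqr0_mulV : (1%:M + A) *m (1%:M - A) = 1%:M.
Proof. by rewrite mulmxDl !mulmxBr !mul1mx !mulmx1 A2 subr0 subrK. Qed.

Lemma unitmx_1D_sqr0 : 1%:M + A \in unitmx.
Proof. by case: (mulmx1_unit mx1D_sqr0_mulV). Qed.

Lemma invmx_1D_sqr0 : invmx (1%:M + A) = 1%:M - A.
Proof.
by have := mulKmx unitmx_1D_sqr0 (1%:M - A); rewrite mx1D_sqr0_mulV mulmx1.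
Qed.

End SquareZero.

Lemma mx_sqr0_scale (R : comPzRingType) n (A : 'M[R]_n) t :
  A *m A = 0 -> (t *: A) *m (t *: A) = 0.
Proof. by move=> A2; rewrite -scalemxAl -scalemxAr scalerA A2 scaler0. Qed.

Lemma mx_sqr0_rank1 (R : pzRingType) n (u : 'cV[R]_n) (v : 'rV[R]_n) :
  v *m u = 0 -> (u *m v) *m (u *m v) = 0.
Proof. by move=> vu0; rewrite mulmxA -(mulmxA u) vu0 mulmx0 mul0mx. Qed.

Section Update.
Variables k N : nat.
Implicit Types (f : {ffun 'I_k -> 'I_N}) (p : 'I_k) (i : 'I_N).

Lemma upd_eq f p i : upd f p i p = i.
Proof. by rewrite ffunE eqxx. Qed.

Lemma upd_neq f p i t : t != p -> upd f p i t = f t.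
Proof. by rewrite ffunE => /negbTE ->. Qed.

Lemma upd_upd f p i j : upd (upd f p i) p j = upd f p j.
Proof. by apply/ffunP => t; rewrite !ffunE; case: eqP. Qed.

Lemma upd_id f p : upd f p (f p) = f.
Proof. by apply/ffunP => t; rewrite ffunE; case: eqP => // ->. Qed.

Lemma upd_tperm f p p' : p' != p ->
  upd (upd f p (f p')) p' (f p) = [ffun t => f (tperm p p' t)].
Proof.
move=> p'p; apply/ffunP => t; rewrite !ffunE.
case: (t =P p') => [->|/eqP tp']; first by rewrite tpermR.
case: (t =P p) => [->|/eqP tp]; first by rewrite tpermL.
by rewrite tpermD // eq_sym.
Qed.

Lemma prod_upd (R : comPzSemiRingType) w a l (F : 'I_k -> 'I_N -> R) :
  \prod_p F p (upd w a l p) = F a l * \prod_(p | p != a) F p (w p).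
Proof.
rewrite (bigD1 a) //= upd_eq; congr (_ * _).
by apply: eq_bigr => p pa; rewrite upd_neq.
Qed.

End Update.

(** * The infinitesimal action of gl_N *)

Section InfinitesimalAction.
Variables N m n : nat.
Implicit Types (A B : 'M[algC]_N) (T U : tensor N m n) (x : idx N m n).

Definition glderV A T : tensor N m n :=
  [ffun x : idx N m n =>
     \sum_(p < m) \sum_(k < N) A (x.1 p) k * T (upd x.1 p k, x.2)].

Definition glderVs A T : tensor N m n :=
  [ffun x : idx N m n =>
     \sum_(q < n) \sum_(k < N) A k (x.2 q) * T (x.1, upd x.2 q k)].

Definition glder A T : tensor N m n := glderV A T - glderVs A T.

Fact glderV_is_linear A : linear (glderV A).
Proof.
move=> c T U; apply/ffunP => x; rewrite !ffunE scaler_sumr -big_split.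
apply: eq_bigr => p _; rewrite scaler_sumr -big_split; apply: eq_bigr => i _.
by rewrite !ffunE mulrDr scalerAr.
Qed.

HB.instance Definition _ A :=
  GRing.isLinear.Build algC _ _ _ (glderV A) (glderV_is_linear A).

Fact glderVs_is_linear A : linear (glderVs A).
Proof.
move=> c T U; apply/ffunP => x; rewrite !ffunE scaler_sumr -big_split.
apply: eq_bigr => p _; rewrite scaler_sumr -big_split; apply: eq_bigr => i _.
by rewrite !ffunE mulrDr scalerAr.
Qed.

HB.instance Definition _ A :=
  GRing.isLinear.Build algC _ _ _ (glderVs A) (glderVs_is_linear A).

Fact glder_is_linear A : linear (glder A).
Proof. by move=> c T U /=; rewrite /glder !linearP scalerN scalerBr addrACA. Qed.

HB.instance Definition _ A :=
  GRing.isLinear.Build algC _ _ _ (glder A) (glder_is_linear A).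

Lemma glderV_delta i j T : glderV (delta_mx i j) T =
  [ffun x : idx N m n => \sum_p (x.1 p == i)%:R * T (upd x.1 p j, x.2)].
Proof.
apply/ffunP => x; rewrite !ffunE; apply: eq_bigr => p _.
rewrite (bigD1 j) //= mxE eqxx andbT.
by rewrite big1 ?addr0 // => k /negbTE kj; rewrite mxE kj andbF mul0r.
Qed.

Lemma glderVs_delta i j T : glderVs (delta_mx i j) T =
  [ffun x : idx N m n => \sum_q (x.2 q == j)%:R * T (x.1, upd x.2 q i)].
Proof.
apply/ffunP => x; rewrite !ffunE; apply: eq_bigr => q _.
rewrite (bigD1 i) //= mxE eqxx /= eq_sym.
by rewrite big1 ?addr0 // => k /negbTE ki; rewrite mxE ki mul0r.
Qed.

Lemma Eact_glder i j T : Eact i j T = - glder (delta_mx j i) T.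
Proof.
rewrite opprB /glder glderV_delta glderVs_delta; apply/ffunP => x.
rewrite !ffunE -sumrN addrC.
by congr (_ + _); apply: eq_bigr => p _; case: eqP; rewrite ?mul1r ?mul0r ?oppr0.
Qed.

Lemma glderV_mxlinear a A B T :
  glderV (a *: A + B) T = a *: glderV A T + glderV B T.
Proof.
apply/ffunP => x; rewrite !ffunE scaler_sumr -big_split; apply: eq_bigr => p _.
rewrite scaler_sumr -big_split; apply: eq_bigr => k _.
by rewrite !mxE mulrDl -mulrA.
Qed.

Lemma glderVs_mxlinear a A B T :
  glderVs (a *: A + B) T = a *: glderVs A T + glderVs B T.
Proof.
apply/ffunP => x; rewrite !ffunE scaler_sumr -big_split; apply: eq_bigr => q _.
rewrite scaler_sumr -big_split; apply: eq_bigr => k _.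
by rewrite !mxE mulrDl -mulrA.
Qed.

Lemma glder_mxlinear a A B T : glder (a *: A + B) T = a *: glder A T + glder B T.
Proof. by rewrite /glder glderV_mxlinear glderVs_mxlinear scalerBr opprD addrACA. Qed.

Lemma glder0 T : glder 0 T = 0.
Proof.
apply/ffunP => x; rewrite !ffunE !big1 ?subrr // => ? _; rewrite big1 // => *;
by rewrite mxE mul0r.
Qed.

Lemma glderDl A B T : glder (A + B) T = glder A T + glder B T.
Proof. by have := glder_mxlinear 1 A B T; rewrite !scale1r. Qed.

Lemma glderZl a A T : glder (a *: A) T = a *: glder A T.
Proof. by rewrite -[a *: A]addr0 glder_mxlinear glder0 addr0. Qed.

Lemma glder_sum (I : finType) (A : I -> 'M_N) T :
  glder (\sum_i A i) T = \sum_i glder (A i) T.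
Proof. exact: (big_morph (glder^~ T) (fun A B => glderDl A B T) (glder0 T)). Qed.

Lemma glderV1 T : glderV 1%:M T = m%:R *: T.
Proof.
apply/ffunP => x; rewrite !ffunE.
transitivity (\sum_(p < m) T x); last by rewrite sumr_const card_ord scaler_nat.
apply: eq_bigr => p _; under eq_bigr => k _ do rewrite mxE.
by rewrite sum_delta_mul upd_id -surjective_pairing.
Qed.

Lemma glderVs1 T : glderVs 1%:M T = n%:R *: T.
Proof.
apply/ffunP => x; rewrite !ffunE.
transitivity (\sum_(p < n) T x); last by rewrite sumr_const card_ord scaler_nat.
apply: eq_bigr => q _; under eq_bigr => k _ do rewrite mxE eq_sym.
by rewrite sum_delta_mul upd_id -surjective_pairing.
Qed.

Lemma glder1 T : glder 1%:M T = (m%:R - n%:R) *: T.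
Proof. by rewrite /glder glderV1 glderVs1 scalerBl. Qed.

End InfinitesimalAction.

(** * Coordinates of the Casimir operator *)

Section CasimirCoordinates.
Variables N m n : nat.
Implicit Types (T : tensor N m n) (x : idx N m n).

Lemma sum_glderVV T :
  \sum_i \sum_j glderV (delta_mx j i) (glderV (delta_mx i j) T)
  = (N * m)%:R *: T + \sum_p \sum_(p' | p' != p) tauV p p' T.
Proof.
apply/ffunP => x; rewrite !ffunE sum_ffunE.
under eq_bigr => i _ do rewrite sum_ffunE.
under eq_bigr => i _ do under eq_bigr => j _ do rewrite !glderV_delta !ffunE /=.
under eq_bigr => i _ do rewrite exchange_big /=.
under eq_bigr => i _ do under eq_bigr => p _ do rewrite sum_delta_mul.
rewrite exchange_big /=.
under eq_bigr => p _ do under eq_bigr => i _ do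
  rewrite ffunE (bigD1 p) //= upd_eq eqxx mul1r upd_upd upd_id -surjective_pairing.
under eq_bigr => p _ do rewrite big_split /= sumr_const card_ord.
rewrite big_split /= sumr_const card_ord -mulrnA scaler_nat sum_ffunE.
congr (_ + _); apply: eq_bigr => p _; rewrite sum_ffunE.
under eq_bigr => i _ do under eq_bigr => p' p'p do rewrite upd_neq //.
rewrite exchange_big /=; apply: eq_bigr => p' p'p.
by rewrite sum_delta_mul !ffunE upd_tperm.
Qed.

Lemma sum_glderVsVs T :
  \sum_i \sum_j glderVs (delta_mx j i) (glderVs (delta_mx i j) T)
  = (N * n)%:R *: T + \sum_q \sum_(q' | q' != q) tauVs q q' T.
Proof.
apply/ffunP => x; rewrite !ffunE sum_ffunE.
under eq_bigr => i _ do rewrite sum_ffunE.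
rewrite exchange_big /=.
under eq_bigr => j _ do under eq_bigr => i _ do rewrite !glderVs_delta !ffunE /=.
under eq_bigr => j _ do rewrite exchange_big /=.
under eq_bigr => j _ do under eq_bigr => q _ do rewrite sum_delta_mul.
rewrite exchange_big /=.
under eq_bigr => q _ do under eq_bigr => j _ do
  rewrite ffunE (bigD1 q) //= upd_eq eqxx mul1r upd_upd upd_id -surjective_pairing.
under eq_bigr => q _ do rewrite big_split /= sumr_const card_ord.
rewrite big_split /= sumr_const card_ord -mulrnA scaler_nat sum_ffunE.
congr (_ + _); apply: eq_bigr => q _; rewrite sum_ffunE.
under eq_bigr => j _ do under eq_bigr => q' q'q do rewrite upd_neq //.
rewrite exchange_big /=; apply: eq_bigr => q' q'q.
by rewrite sum_delta_mul !ffunE upd_tperm.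
Qed.

Lemma AopE T x : Aop T x =
  \sum_p \sum_q (x.1 p == x.2 q)%:R * \sum_k T (upd x.1 p k, upd x.2 q k).
Proof.
rewrite sum_ffunE; apply: eq_bigr => p _; rewrite sum_ffunE; apply: eq_bigr => q _.
by rewrite ffunE; case: eqP; rewrite ?mul1r ?mul0r.
Qed.

Lemma sum_glderVVs T :
  \sum_i \sum_j glderV (delta_mx j i) (glderVs (delta_mx i j) T) = Aop T.
Proof.
apply/ffunP => x; rewrite AopE sum_ffunE.
under eq_bigr => i _ do rewrite sum_ffunE.
under eq_bigr => i _ do under eq_bigr => j _ do
  rewrite glderV_delta glderVs_delta !ffunE /=.
under eq_bigr => i _ do rewrite exchange_big /=.
under eq_bigr => i _ do under eq_bigr => p _ do rewrite sum_delta_mul ffunE.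
rewrite exchange_big /=; apply: eq_bigr => p _.
rewrite exchange_big /=; apply: eq_bigr => q _.
by rewrite mulr_sumr; apply: eq_bigr => i _; rewrite eq_sym.
Qed.

Lemma sum_glderVsV T :
  \sum_i \sum_j glderVs (delta_mx j i) (glderV (delta_mx i j) T) = Aop T.
Proof.
apply/ffunP => x; rewrite AopE sum_ffunE.
under eq_bigr => i _ do rewrite sum_ffunE.
rewrite exchange_big /=.
under eq_bigr => j _ do under eq_bigr => i _ do
  rewrite glderV_delta glderVs_delta !ffunE /=.
under eq_bigr => j _ do rewrite exchange_big /=.
under eq_bigr => j _ do under eq_bigr => q _ do rewrite sum_delta_mul ffunE.
rewrite exchange_big /=.
under eq_bigr => q _ do rewrite exchange_big /=.
rewrite exchange_big /=; apply: eq_bigr => p _; apply: eq_bigr => q _.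
by rewrite mulr_sumr.
Qed.

Lemma sum_tauV_neq T : \sum_p \sum_(p' | p' != p) tauV p p' T = Lop T *+ 2.
Proof.
rewrite /Lop; apply: sum_neq_pairs_sym => a b.
by apply/ffunP => x; rewrite !ffunE tpermC.
Qed.

Lemma sum_tauVs_neq T : \sum_q \sum_(q' | q' != q) tauVs q q' T = Rop T *+ 2.
Proof.
rewrite /Rop; apply: sum_neq_pairs_sym => a b.
by apply/ffunP => x; rewrite !ffunE tpermC.
Qed.

Lemma Casimir_Cop T : Casimir T = Cop T.
Proof.
have EactEact i j : Eact i j (Eact j i T) =
    glderV (delta_mx j i) (glderV (delta_mx i j) T)
  - glderV (delta_mx j i) (glderVs (delta_mx i j) T)
  - (glderVs (delta_mx j i) (glderV (delta_mx i j) T)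
     - glderVs (delta_mx j i) (glderVs (delta_mx i j) T)).
  by rewrite !Eact_glder linearN opprK /= /glder !linearB.
have sum_Eact_diag : \sum_i Eact i i T = (n%:R - m%:R) *: T.
  under eq_bigr => i _ do rewrite Eact_glder.
  by rewrite sumrN -glder_sum -mx1_sum_delta glder1 -scaleNr opprB.
rewrite /Casimir sum_Eact_diag.
under eq_bigr => i _ do under eq_bigr => j _ do rewrite EactEact.
under eq_bigr => i _ do rewrite !sumrB.
rewrite !sumrB sum_glderVV sum_glderVsVs sum_glderVVs sum_glderVsV.
rewrite sum_tauV_neq sum_tauVs_neq; apply/ffunP => x; rewrite !ffunE !natrM.
by rewrite !scale_regularE; field.
Qed.

End CasimirCoordinates.

(** * Equivariance of C_{m,n} *)

Lemma sum_contract_reindex N m n (a : 'I_m) (b : 'I_n)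
    (F : idx N m n -> 'I_N -> algC) :
  \sum_(y : idx N m n) \sum_k
     (y.1 a == y.2 b)%:R * F (upd y.1 a k, upd y.2 b k) (y.1 a)
  = \sum_(y : idx N m n) \sum_l (y.1 a == y.2 b)%:R * F y l.
Proof.
rewrite !pair_bigA /=.
pose phi (w : idx N m n * 'I_N) : idx N m n * 'I_N :=
  if w.1.1 a == w.1.2 b then ((upd w.1.1 a w.2, upd w.1.2 b w.2), w.1.1 a) else w.
have phiK : involutive phi.
  move=> [[y1 y2] k]; rewrite /phi /=.
  have [e|ne] := eqVneq (y1 a) (y2 b); last by rewrite (negbTE ne).
  by rewrite !upd_eq eqxx /= !upd_upd upd_id e upd_id.
rewrite [LHS](reindex_inj (inv_inj phiK)); apply: eq_bigr => -[[y1 y2] k] _.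
rewrite /phi /=; have [e|ne] := eqVneq (y1 a) (y2 b) => /=.
  by rewrite !upd_eq eqxx /= !upd_upd upd_id e upd_id.
by rewrite (negbTE ne) !mul0r.
Qed.

Section Equivariance.
Variables (N m n : nat) (g : 'M[algC]_N).
Implicit Types (T : tensor N m n) (x y : idx N m n).

Fact glact_is_linear : linear (@glact N m n g).
Proof.
move=> c T U; apply/ffunP => x; rewrite !ffunE scaler_sumr -big_split.
by apply: eq_bigr => y _; rewrite !ffunE mulrDr scalerAr.
Qed.

HB.instance Definition _ :=
  GRing.isLinear.Build algC _ _ _ (@glact N m n g) glact_is_linear.

Lemma tauV_glact a b T : tauV a b (glact g T) = glact g (tauV a b T).
Proof.
apply/ffunP => x; rewrite !ffunE /=.
pose phi y : idx N m n := ([ffun t => y.1 (tperm a b t)], y.2).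
have phiK : involutive phi.
  by move=> [y1 y2]; congr (_, _); apply/ffunP => t; rewrite !ffunE tpermK.
rewrite [RHS](reindex_inj (inv_inj phiK)); apply: eq_bigr => y _.
rewrite ffunE /=; congr (_ * _ * _); last by rewrite -[in LHS](phiK y).
rewrite [LHS](reindex_inj (@perm_inj _ (tperm a b))); apply: eq_bigr => p _.
by rewrite !ffunE tpermK.
Qed.

Lemma tauVs_glact a b T : tauVs a b (glact g T) = glact g (tauVs a b T).
Proof.
apply/ffunP => x; rewrite !ffunE /=.
pose phi y : idx N m n := (y.1, [ffun t => y.2 (tperm a b t)]).
have phiK : involutive phi.
  by move=> [y1 y2]; congr (_, _); apply/ffunP => t; rewrite !ffunE tpermK.
rewrite [RHS](reindex_inj (inv_inj phiK)); apply: eq_bigr => y _.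
rewrite ffunE /=; congr (_ * _ * _); last by rewrite -[in LHS](phiK y).
rewrite [LHS](reindex_inj (@perm_inj _ (tperm a b))); apply: eq_bigr => q _.
by rewrite !ffunE tpermK.
Qed.

Lemma tauMix_glact a b T : g \in unitmx ->
  tauMix a b (glact g T) = glact g (tauMix a b T).
Proof.
move=> g_unit; apply/ffunP => -[u v]; rewrite !ffunE /=.
pose G' (y1 : {ffun 'I_m -> 'I_N}) := \prod_(p | p != a) g (u p) (y1 p).
pose H' (y2 : {ffun 'I_n -> 'I_N}) := \prod_(q | q != b) invmx g (y2 q) (v q).
pose Z := \sum_(y : idx N m n) (y.1 a == y.2 b)%:R * (G' y.1 * H' y.2 * T y).
have gVg i j : \sum_k invmx g i k * g k j = (i == j)%:R.
  by have := congr1 (fun M : 'M_N => M i j) (mulVmx g_unit); rewrite !mxE.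
have ggV i j : \sum_k g i k * invmx g k j = (i == j)%:R.
  by have := congr1 (fun M : 'M_N => M i j) (mulmxV g_unit); rewrite !mxE.
(* Both sides equal [u a == v b] * Z: on the left g^-1 g = 1 contracts the two
   updated indices; on the right, after reindexing the inserted pair, g g^-1 = 1. *)
transitivity ((u a == v b)%:R * Z).
  case: eqP => _; last by rewrite mul0r.
  rewrite mul1r; under eq_bigr => k _ do rewrite ffunE.
  rewrite exchange_big /=; apply: eq_bigr => y _.
  transitivity ((\sum_k invmx g (y.2 b) k * g k (y.1 a)) * (G' y.1 * H' y.2 * T y)).
    rewrite mulr_suml; apply: eq_bigr => k _.
    rewrite (prod_upd u a k (fun p i => g i (y.1 p))).
    rewrite (prod_upd v b k (fun q i => invmx g (y.2 q) i)).
    by rewrite /G' /H'; ring.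
  by rewrite gVg eq_sym.
pose F (y : idx N m n) l := (\prod_p g (u p) (upd y.1 a l p))
  * (\prod_q invmx g (upd y.2 b l q) (v q)) * T y.
transitivity (\sum_(y : idx N m n) \sum_l (y.1 a == y.2 b)%:R * F y l).
  rewrite /Z mulr_sumr; apply: eq_bigr => y _.
  under eq_bigr => l _ do rewrite /F (prod_upd _ _ _ (fun p i => g (u p) i))
    (prod_upd _ _ _ (fun q i => invmx g i (v q))).
  rewrite -[(u a == v b)%:R]ggV mulr_suml; apply: eq_bigr => l _.
  by rewrite /G' /H'; ring.
rewrite -sum_contract_reindex; apply: eq_bigr => y _; rewrite ffunE.
have [e|ne] := eqVneq (y.1 a) (y.2 b); last first.
  by rewrite big1 ?mulr0 // => k _; rewrite mul0r.
rewrite mulr_sumr; apply: eq_bigr => k _; rewrite mulr1n mul1r /F /=.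
by rewrite !upd_upd upd_id e upd_id.
Qed.

Lemma tauV_is_linear a b : linear (@tauV N m n a b).
Proof. by move=> c T U; apply/ffunP => x; rewrite !ffunE. Qed.

Lemma tauVs_is_linear a b : linear (@tauVs N m n a b).
Proof. by move=> c T U; apply/ffunP => x; rewrite !ffunE. Qed.

Lemma tauMix_is_linear a b : linear (@tauMix N m n a b).
Proof.
move=> c T U; apply/ffunP => x; rewrite !ffunE.
case: ifP => _; last by rewrite scaler0 addr0.
by rewrite scaler_sumr -big_split; apply: eq_bigr => k _; rewrite !ffunE.
Qed.

Lemma Cop_is_linear : linear (@Cop N m n).
Proof.
have Llin : linear (@Lop N m n).
  by apply: linear_sum_fun => a; apply: linear_sum_fun => b; apply: tauV_is_linear.
have Rlin : linear (@Rop N m n).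
  by apply: linear_sum_fun => a; apply: linear_sum_fun => b; apply: tauVs_is_linear.
have Alin : linear (@Aop N m n).
  by apply: linear_sum_fun => a; apply: linear_sum_fun => b; apply: tauMix_is_linear.
move=> c T U; rewrite /Cop Llin Rlin Alin; apply/ffunP => x; rewrite !ffunE.
by rewrite !scale_regularE; ring.
Qed.

Lemma Cop_glact T : g \in unitmx -> Cop (glact g T) = glact g (Cop T).
Proof.
move=> g_unit; rewrite /Cop !linearD linearN linearZ /=; congr (_ + _ - _ + _).
- rewrite /Lop !linear_sum; apply: eq_bigr => a _; rewrite linear_sum.
  by apply: eq_bigr => b _; rewrite tauV_glact.
- rewrite /Rop !linear_sum; apply: eq_bigr => a _; rewrite linear_sum.
  by apply: eq_bigr => b _; rewrite tauVs_glact.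
- rewrite /Aop !linear_sum; apply: eq_bigr => a _; rewrite linear_sum.
  by apply: eq_bigr => b _; rewrite tauMix_glact.
Qed.
End Equivariance.

(** * The infinitesimal action as a derivative *)

Section TensorPowerPoly.
Variables (R : comNzRingType) (k N : nat) (B : 'M[R]_N).
Implicit Types (w y : {ffun 'I_k -> 'I_N}).

Definition tpow_poly w y : {poly R} :=
  \prod_p ((w p == y p)%:R%:P + B (w p) (y p) *: 'X).

Lemma horner_tpow_poly w y t :
  (tpow_poly w y).[t] = \prod_p (1%:M + t *: B) (w p) (y p).
Proof.
rewrite horner_prod; apply: eq_bigr => p _.
by rewrite !mxE hornerD hornerC hornerZ hornerX mulrC.
Qed.

Lemma tpow_poly_coef0 w y : (tpow_poly w y)`_0 = (w == y)%:R.
Proof.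
rewrite coef0_prod -prod_eq_ffun; apply: eq_bigr => p _.
by rewrite coefD coefC coefZ coefX mulr0 addr0.
Qed.

Lemma prod_eq_ffun_off w y p :
  \prod_(p' | p' != p) (w p' == y p')%:R = (upd w p (y p) == y)%:R :> R.
Proof.
rewrite -prod_eq_ffun [RHS](bigD1 p) //= upd_eq eqxx mul1r.
by apply: eq_bigr => p' p'p; rewrite upd_neq.
Qed.

Lemma sum_eq_ffun_off w p (G : {ffun 'I_k -> 'I_N} -> R) :
  \sum_(y : {ffun 'I_k -> 'I_N}) (\prod_(p' | p' != p) (w p' == y p')%:R) * G y
  = \sum_l G (upd w p l).
Proof.
transitivity (\sum_(y : {ffun 'I_k -> 'I_N}) \sum_l
                (y p == l)%:R * ((upd w p l == y)%:R * G y)).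
  by apply: eq_bigr => y _; rewrite sum_delta_mul prod_eq_ffun_off.
rewrite exchange_big /=; apply: eq_bigr => l _.
under eq_bigr => y _ do rewrite mulrCA.
by rewrite sum_delta_mul upd_eq eqxx mul1r.
Qed.

Lemma sum_tpow_poly_coef1 w (G : {ffun 'I_k -> 'I_N} -> R) :
  \sum_(y : {ffun 'I_k -> 'I_N}) (tpow_poly w y)`_1 * G y
  = \sum_p \sum_l B (w p) l * G (upd w p l).
Proof.
under eq_bigr => y _ do rewrite coef1_prod ?index_enum_uniq // mulr_suml.
rewrite exchange_big /=; apply: eq_bigr => p _.
transitivity (\sum_(y : {ffun 'I_k -> 'I_N})
    (\prod_(p' | p' != p) (w p' == y p')%:R) * (B (w p) (y p) * G y)).
  apply: eq_bigr => y _; rewrite coefD coefC coefZ coefX mulr1 add0r -mulrA mulrCA.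
  congr (_ * _).
  by apply: eq_bigr => p' _; rewrite coefD coefC coefZ coefX mulr0 addr0.
by rewrite sum_eq_ffun_off; apply: eq_bigr => l _; rewrite upd_eq.
Qed.

End TensorPowerPoly.

Section GlactPoly.
Variables (N m n : nat) (A : 'M[algC]_N).
Implicit Types (T : tensor N m n) (x y : idx N m n).

Definition glact_poly T x : {poly algC} :=
  \sum_y T y *: (tpow_poly A x.1 y.1 * tpow_poly (- A^T) x.2 y.2).

Lemma horner_glact_poly T x t : A *m A = 0 ->
  (glact_poly T x).[t] = glact (1%:M + t *: A) T x.
Proof.
move=> A2; rewrite ffunE horner_sum invmx_1D_sqr0 ?mx_sqr0_scale //.
apply: eq_bigr => y _.
rewrite hornerZ hornerM !horner_tpow_poly mulrC; congr (_ * _ * _).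
by apply: eq_bigr => q _; rewrite !mxE eq_sym mulrN.
Qed.

Lemma glact_poly_coef1 T x : (glact_poly T x)`_1 = glder A T x.
Proof.
have -> : glder A T x = glderV A T x - glderVs A T x.
  by rewrite /glder; set V := glderV A T; set W := glderVs A T; rewrite !ffunE.
rewrite coef_sum.
under eq_bigr => y _ do
  rewrite coefZ coefM big_ord_recr big_ord1 /= !tpow_poly_coef0 mulrDr.
have sum_pair (F : idx N m n -> algC) : \sum_y F y = \sum_y1 \sum_y2 F (y1, y2).
  by rewrite pair_bigA; apply: eq_bigr => -[].
rewrite big_split /= addrC !sum_pair; congr (_ + _).
  under eq_bigr => y1 _ do under eq_bigr => y2 _ do rewrite mulrA mulrC /=.
  under eq_bigr => y1 _ do rewrite sum_delta_mul mulrC.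
  by rewrite sum_tpow_poly_coef1 ffunE.
rewrite exchange_big /=.
under eq_bigr => y2 _ do under eq_bigr => y1 _ do rewrite mulrCA /=.
under eq_bigr => y2 _ do rewrite sum_delta_mul mulrC.
rewrite sum_tpow_poly_coef1 ffunE -sumrN; apply: eq_bigr => q _.
by rewrite -sumrN; apply: eq_bigr => l _; rewrite !mxE mulNr.
Qed.

End GlactPoly.

(** * Equivariant maps commute with the Casimir operator *)

Section Commutant.
Variables N m n : nat.
Implicit Types (A : 'M[algC]_N) (T U : tensor N m n) (x y : idx N m n).

Definition tensor_unit y : tensor N m n := [ffun z => (z == y)%:R].

Lemma tensor_unit_sum U : \sum_y U y *: tensor_unit y = U.
Proof.
apply/ffunP => z; rewrite sum_ffunE -[RHS]sum_delta_mul.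
by apply: eq_bigr => y _; rewrite ffunE ffunE eq_sym mulrC.
Qed.

Lemma linear_tensorE (f : {linear tensor N m n -> tensor N m n}) U x :
  f U x = \sum_y U y * f (tensor_unit y) x.
Proof.
rewrite -{1}(tensor_unit_sum U) linear_sum sum_ffunE.
by apply: eq_bigr => y _; rewrite linearZ ffunE.
Qed.

Variable f : {linear tensor N m n -> tensor N m n}.
Hypothesis f_equivariant : gl_equivariant f.

Definition commutes_glder A := forall T, f (glder A T) = glder A (f T).

Lemma commutes_glder_sqr0 A : A *m A = 0 -> commutes_glder A.
Proof.
(* By equivariance at 1 + t A, p and glact_poly A (f T) x agree at every t;
   compare their coefficients of degree 1. *)
move=> A2 T; apply/ffunP => x.
pose p := \sum_y f (tensor_unit y) x *: glact_poly A T y.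
have p_horner t : p.[t] = (glact_poly A (f T) x).[t].
  rewrite horner_glact_poly // -f_equivariant ?unitmx_1D_sqr0 ?mx_sqr0_scale //.
  rewrite linear_tensorE horner_sum; apply: eq_bigr => y _.
  by rewrite hornerZ horner_glact_poly // mulrC.
rewrite linear_tensorE -glact_poly_coef1 -(poly_horner_inj p_horner) coef_sum.
by apply: eq_bigr => y _; rewrite coefZ glact_poly_coef1 mulrC.
Qed.

Lemma commutes_glderD A B :
  commutes_glder A -> commutes_glder B -> commutes_glder (A + B).
Proof. by move=> cA cB T; rewrite !glderDl linearD cA cB. Qed.

Lemma commutes_glderZ a A : commutes_glder A -> commutes_glder (a *: A).
Proof. by move=> cA T; rewrite !glderZl linearZ cA. Qed.

Lemma commutes_glderN A : commutes_glder A -> commutes_glder (- A).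
Proof. by move=> cA; rewrite -scaleN1r; apply: commutes_glderZ. Qed.

Lemma commutes_glder_sum (I : finType) (A : I -> 'M_N) :
  (forall i, commutes_glder (A i)) -> commutes_glder (\sum_i A i).
Proof.
by move=> cA T; rewrite !glder_sum linear_sum; apply: eq_bigr => i _; apply: cA.
Qed.

Lemma commutes_glder1 : commutes_glder 1%:M.
Proof. by move=> T; rewrite !glder1 linearZ. Qed.

Lemma commutes_glder_offdiag i j : i != j -> commutes_glder (delta_mx i j).
Proof.
by move=> ij; apply: commutes_glder_sqr0; rewrite mul_delta_mx_0 // eq_sym.
Qed.

Lemma commutes_glder_diff_diag i j :
  commutes_glder (delta_mx i i - delta_mx j j).
Proof.
have [<-|ij] := eqVneq i j.
  by rewrite subrr; apply: commutes_glder_sqr0; rewrite mulmx0.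
pose u : 'cV[algC]_N := delta_mx i 0 - delta_mx j 0.
pose v : 'rV[algC]_N := delta_mx 0 i + delta_mx 0 j.
have -> : delta_mx i i - delta_mx j j = u *m v - delta_mx i j + delta_mx j i.
  rewrite mulmxBl !mulmxDr !mul_delta_mx opprD addrA.
  by rewrite (addrAC _ (- _) (- delta_mx i j)) (addrAC _ (- _) (- delta_mx i j)) addrK
    (addrAC _ (- _) (delta_mx j i)) subrK.
apply: commutes_glderD; last by apply: commutes_glder_offdiag; rewrite eq_sym.
apply: commutes_glderD; last by apply/commutes_glderN/commutes_glder_offdiag.
apply/commutes_glder_sqr0/mx_sqr0_rank1.
rewrite mulmxBr !mulmxDl !mul_delta_mx_cond !eqxx (negbTE ij) eq_sym (negbTE ij).
by rewrite addr0 add0r subrr.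
Qed.

Hypothesis N_gt0 : (0 < N)%N.

Lemma commutes_glder_diag i : commutes_glder (delta_mx i i).
Proof.
have -> : delta_mx i i =
    N%:R^-1 *: (1%:M + \sum_j (delta_mx i i - delta_mx j j)) :> 'M[algC]_N.
  rewrite sumrB -mx1_sum_delta addrC subrK sumr_const card_ord -scaler_nat.
  by rewrite scalerA mulVf ?scale1r // pnatr_eq0 -lt0n.
apply/commutes_glderZ/commutes_glderD; first exact: commutes_glder1.
by apply: commutes_glder_sum => j; apply: commutes_glder_diff_diag.
Qed.

Lemma commutes_glder_all A : commutes_glder A.
Proof.
rewrite [A]matrix_sum_delta; apply: commutes_glder_sum => i.
apply: commutes_glder_sum => j; apply: commutes_glderZ.
have [<-|ij] := eqVneq i j; [exact: commutes_glder_diag | exact: commutes_glder_offdiag].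
Qed.

Lemma commutes_Eact i j T : f (Eact i j T) = Eact i j (f T).
Proof. by rewrite !Eact_glder linearN commutes_glder_all. Qed.

Lemma commutes_Casimir T : f (Casimir T) = Casimir (f T).
Proof.
rewrite /Casimir linearZ /= linearD [f (_ *: _)]linearZ /=.
congr (_ *: (_ + _ *: _)); rewrite linear_sum; apply: eq_bigr => i _.
  by rewrite linear_sum; apply: eq_bigr => j _; rewrite !commutes_Eact.
exact: commutes_Eact.
Qed.

End Commutant.

Theorem lemma2p5 (N m n : nat) : (0 < N)%N ->
  (forall T : tensor N m n,
     ((0 < m)%N -> (0 < n)%N -> Casimir T = Cop T)
  /\ (n = 0%N -> Casimir T = Lop T)
  /\ (m = 0%N -> Casimir T = Rop T + (N * n)%:R *: T))
  /\ ((0 < m)%N -> (0 < n)%N ->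
      (* C_{m,n} lies in C_{m,n}(N) = End_{GL(N)}(V^{m,n}) ... *)
      gl_equivariant (@Cop N m n)
      /\ (forall T1 T2 : tensor N m n, forall c : algC,
            Cop (c *: T1 + T2) = c *: Cop T1 + Cop T2)
      (* ... and commutes with every element of C_{m,n}(N) *)
      /\ (forall f : {linear tensor N m n -> tensor N m n},
            gl_equivariant f -> forall T : tensor N m n, f (Cop T) = Cop (f T))).
Proof.
move=> N_gt0; split=> [T | _ _].
  rewrite Casimir_Cop /Cop; split=> //; split=> [n0 | m0]; subst.
    rewrite /Rop /Aop big_ord0 big1 => [|a _]; last exact: big_ord0.
    by rewrite muln0 scale0r subr0 !addr0.
  by rewrite /Lop /Aop !big_ord0 add0r subr0.
split; first by move=> g g_unit T; apply: Cop_glact.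
split; first by move=> T1 T2 c; apply: Cop_is_linear.
by move=> f f_equivariant T; rewrite -!Casimir_Cop; apply: commutes_Casimir.
Qed.
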